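(* Assume $\mathbf E\mathbf E^\top$ and $\mathbf F^{(q)}\mathbf F^{(q)\top}$ ($1\le q\le Q$) are irreducible. Let $\bar{\mathbf S}=\mathbf J\boldsymbol\Sigma\mathbf J^\top$ be an eigenvalue decomposition with $\mathbf J\in\mathbb R^{K\times K}$ orthogonal and eigenvalues in decreasing order, let $\mathbf U=\boldsymbol\Theta_\theta\mathbf J=[\mathbf u_1,\dots,\mathbf u_K]$, and for any orthogonal $\mathbf O\in\mathbb R^{(K-1)\times(K-1)}$ and $c\in\{-1,1\}$ let $\mathbf R\in\mathbb R^{n\times(K-1)}$ have $i$-th row $\mathbf R_{\bar i}=([\mathbf u_2,\dots,\mathbf u_K]\mathbf O)_{\bar i}/(c\,\mathbf u_1(i))$. Then for all $1\le i_1,i_2\le n$: $\|\mathbf R_{\bar{i_1}}-\mathbf R_{\bar{i_2}}\|\ge2$ if $l_{i_1}\ne l_{i_2}$, and $\|\mathbf R_{\bar{i_1}}-\mathbf R_{\bar{i_2}}\|=0$ if $l_{i_1}=l_{i_2}$.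
   Context: Fix integers $K\ge2$, $K'\ge1$, $Q\ge1$. Primary nodes $\{1,\dots,n\}$ have labels $l_i\in\{1,\dots,K\}$, bipartite nodes $\{1,\dots,m\}$ have labels $r_j\in\{1,\dots,K'\}$, all communities nonempty. Parameters: $\boldsymbol\theta\in(0,1]^n$, $\boldsymbol\delta\in(0,1]^m$, symmetric $\mathbf E\in[0,1]^{K\times K}$, $\mathbf F^{(q)}\in[0,1]^{K\times K'}$. Define $\boldsymbol\theta^{(k)}_i=\theta_i\mathbb I(l_i=k)$, $\boldsymbol\delta^{(k')}_j=\delta_j\mathbb I(r_j=k')$, $\boldsymbol\Theta_\theta\in\mathbb R^{n\times K}$ with $\boldsymbol\Theta_\theta(i,k)=\theta_i\mathbb I(l_i=k)/\|\boldsymbol\theta^{(k)}\|$, $\boldsymbol\Psi_\theta=\mathrm{diag}(\|\boldsymbol\theta^{(k)}\|/\|\boldsymbol\theta\|)$, $\boldsymbol\Psi_\delta=\mathrm{diag}(\|\boldsymbol\delta^{(k')}\|/\|\boldsymbol\delta\|)$, $\mathbf S^{(0)}=\boldsymbol\Psi_\theta\mathbf E\boldsymbol\Psi_\theta$, $\mathbf S^{(q)}=\boldsymbol\Psi_\theta\mathbf F^{(q)}\boldsymbol\Psi_\delta$, $\bar{\mathbf S}=(\|\boldsymbol\theta\|^2/\|\boldsymbol\delta\|^2)\mathbf S^{(0)}\mathbf S^{(0)\top}+\sum_q\mathbf S^{(q)}\mathbf S^{(q)\top}$. Then $\mathbf U=\boldsymbol\Theta_\theta\mathbf J$ gives the $K$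 leading eigenvectors of the population aggregated matrix $\boldsymbol\Omega_M=\|\boldsymbol\theta\|^2\|\boldsymbol\delta\|^2\boldsymbol\Theta_\theta\bar{\mathbf S}\boldsymbol\Theta_\theta^\top$, and $\mathbf R$ is its ratio matrix. $\mathbf X_{\bar i}$ denotes the $i$-th row of a matrix $\mathbf X$; $\|\cdot\|$ is the Euclidean norm. *)

From HB Require Import structures.
From mathcomp Require Import all_boot all_order all_algebra.
Set Implicit Arguments. Unset Strict Implicit. Unset Printing Implicit Defensive.
Import Order.TTheory GRing.Theory Num.Theory.
Local Open Scope ring_scope.

Section Defs.
Variable R : rcfType.

Definition vnorm (p : nat) (v : 'rV[R]_p) : R := Num.sqrt (\sum_j v 0 j ^+ 2).

Definition fnorm (n : nat) (x : 'I_n -> R) : R := Num.sqrt (\sum_i x i ^+ 2).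

Definition comm_norm (n K : nat) (lab : 'I_n -> 'I_K) (x : 'I_n -> R) (k : 'I_K) : R :=
  fnorm (fun i => x i * (lab i == k)%:R).

Definition ThetaM (n K : nat) (l : 'I_n -> 'I_K) (theta : 'I_n -> R) : 'M[R]_(n, K) :=
  \matrix_(i, k) (theta i * (l i == k)%:R / comm_norm l theta k).

Definition PsiM (n K : nat) (lab : 'I_n -> 'I_K) (x : 'I_n -> R) : 'M[R]_K :=
  diag_mx (\row_k (comm_norm lab x k / fnorm x)).

Definition Sbar (n m K K' Q : nat) (l : 'I_n -> 'I_K) (r : 'I_m -> 'I_K')
    (theta : 'I_n -> R) (delta : 'I_m -> R)
    (E : 'M[R]_K) (F : 'I_Q -> 'M[R]_(K, K')) : 'M[R]_K :=
  let S0 := PsiM l theta *m E *m PsiM l theta in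
  (fnorm theta ^+ 2 / fnorm delta ^+ 2) *: (S0 *m S0^T)
  + \sum_q ((PsiM l theta *m F q *m PsiM r delta) *m (PsiM l theta *m F q *m PsiM r delta)^T).

(* Irreducible square matrix (Perron-Frobenius sense): there is no
   permutation P with P^T A P block upper triangular [[B, C], [0, D]] with
   B, D nonempty square blocks; i.e. there is no nonempty proper index set S
   such that A(i, j) = 0 for all i outside S and j in S. *)
Definition irreducible_mx (K : nat) (A : 'M[R]_K) : Prop :=
  ~ exists S : {set 'I_K},
      [/\ S != set0, S != setT & forall i j, i \notin S -> j \in S -> A i j = 0].

End Defs.

From HB Require Import structures.
From mathcomp Require Import all_boot all_order all_algebra.
From mathcomp Require Import ring lra.
Import Order.TTheory GRing.Theory Num.Theory.
Local Open Scope ring_scope.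

(* [Sbar] is entrywise nonnegative, and since [Psi_theta] has a positive
   diagonal, a zero entry of [Sbar] forces the same entry of [E E^T] to vanish;
   so [Sbar] inherits irreducibility from [E E^T].  By a Perron-Frobenius argument the leading eigenvector
   [J e_1] then has no zero entry: [|J e_1|] has Rayleigh quotient at least that
   of [J e_1], hence is a top eigenvector, and the support of a nonnegative
   eigenvector of an irreducible matrix is everything.  Row [i] of [U = Theta J]
   is a nonzero multiple of row [l_i] of [J], so row [i] of [R] depends only on
   [l_i].  For communities [a != b], orthonormality of the rows of [J] gives
   [||R_a - R_b||^2 = J(a,1)^-2 + J(b,1)^-2], which is at least 4 because
   [J(a,1)^2 + J(b,1)^2 <= 1]. *)

Lemma orthogonal_dotE {R : comPzRingType} {K : nat} (J : 'M[R]_K) u v :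
  J *m J^T = 1%:M -> \sum_i J u i * J v i = (u == v)%:R.
Proof.
move=> /matrixP /(_ u v); rewrite !mxE => <-.
by apply: eq_bigr => i _; rewrite mxE.
Qed.

Lemma orthogonal_col_dotE {R : comPzRingType} {K : nat} (J : 'M[R]_K) u v :
  J *m J^T = 1%:M -> \sum_i J i u * J i v = (u == v)%:R.
Proof.
move=> hJ; have hJt : J^T *m J^T^T = 1%:M by rewrite trmxK (mulmx1C hJ).
by rewrite -(orthogonal_dotE _ u v hJt); apply: eq_bigr => i _; rewrite !mxE.
Qed.

Lemma orthogonal_col_sqr_le1 {R : realDomainType} {K : nat} (J : 'M[R]_K) a b j :
  J *m J^T = 1%:M -> a != b -> J a j ^+ 2 + J b j ^+ 2 <= 1.
Proof.
move=> hJ hab; have := orthogonal_col_dotE J j j hJ; rewrite eqxx mulr1n => <-.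
rewrite (bigD1 a) //= (bigD1 b) 1?eq_sym //= addrA -!expr2 lerDl.
by apply: sumr_ge0 => i _; rewrite -expr2 sqr_ge0.
Qed.

Lemma sum_sqr_mxE {R : comPzRingType} {K : nat} (x : 'cV[R]_K) :
  (x^T *m x) 0 0 = \sum_i x i 0 ^+ 2.
Proof. by rewrite mxE; apply: eq_bigr => i _; rewrite mxE expr2. Qed.

Lemma sum_sqr_orthogonal {R : comPzRingType} {K : nat} (J : 'M[R]_K) (x : 'cV[R]_K) :
  J *m J^T = 1%:M -> \sum_a (J^T *m x) a 0 ^+ 2 = \sum_i x i 0 ^+ 2.
Proof.
by move=> hJ; rewrite -!sum_sqr_mxE trmx_mul trmxK mulmxA -(mulmxA _ J) hJ mulmx1.
Qed.

Definition qform {R : comPzRingType} {K : nat} (S : 'M[R]_K) (x : 'cV[R]_K) : R :=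
  (x^T *m S *m x) 0 0.

Lemma qformE {R : comPzRingType} {K : nat} (S : 'M[R]_K) x :
  qform S x = \sum_i \sum_j x i 0 * S i j * x j 0.
Proof.
rewrite /qform mxE exchange_big; apply: eq_bigr => j _.
by rewrite mxE mulr_suml; apply: eq_bigr => i _; rewrite mxE.
Qed.

Lemma qform_spectral {R : comPzRingType} {K : nat} (J : 'M[R]_K) (s : 'rV[R]_K) x :
  qform (J *m diag_mx s *m J^T) x = \sum_a s 0 a * (J^T *m x) a 0 ^+ 2.
Proof.
rewrite /qform; have -> : x^T *m (J *m diag_mx s *m J^T) *m x =
    (J^T *m x)^T *m diag_mx s *m (J^T *m x) by rewrite trmx_mul trmxK !mulmxA.
by rewrite mul_mx_diag mxE; apply: eq_bigr => a _; rewrite !mxE; ring.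
Qed.

Lemma qform_le_abs {R : realDomainType} {K : nat} (S : 'M[R]_K) x :
  (forall i j, 0 <= S i j) -> qform S x <= qform S (map_mx Num.norm x).
Proof.
move=> hS; rewrite !qformE; apply: ler_sum => i _; apply: ler_sum => j _.
by rewrite !mxE (le_trans (ler_norm _)) // !normrM (ger0_norm (hS i j)).
Qed.

Section TopEigenvalue.
Context {R : realDomainType} {K : nat} (J : 'M[R]_K.+1) (s : 'rV[R]_K.+1).
Hypothesis hJ : J *m J^T = 1%:M.
Hypothesis s0_max : forall a, s 0 a <= s 0 0.

Lemma qform_le_top x :
  qform (J *m diag_mx s *m J^T) x <= s 0 0 * \sum_i x i 0 ^+ 2.
Proof.
rewrite qform_spectral -(sum_sqr_orthogonal J x hJ) mulr_sumr.
by apply: ler_sum => a _; apply: ler_wpM2r; [apply: sqr_ge0 | apply: s0_max].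
Qed.

Lemma qform_eq_top_eigen x :
  qform (J *m diag_mx s *m J^T) x = s 0 0 * \sum_i x i 0 ^+ 2 ->
  J *m diag_mx s *m J^T *m x = s 0 0 *: x.
Proof.
set y := J^T *m x; rewrite qform_spectral -(sum_sqr_orthogonal J x hJ) -/y => hq.
have gap_ge0 a : 0 <= (s 0 0 - s 0 a) * y a 0 ^+ 2.
  by rewrite mulr_ge0 ?sqr_ge0 // subr_ge0.
have gap_eq0 : \sum_a (s 0 0 - s 0 a) * y a 0 ^+ 2 = 0.
  by under eq_bigr do rewrite mulrBl; rewrite sumrB -mulr_sumr hq subrr.
have diag_y : diag_mx s *m y = s 0 0 *: y.
  apply/matrixP => a b; rewrite ord1 mul_diag_mx mxE [in RHS]mxE.
  have /eqP := @psumr_eq0P _ _ _ _ (fun a _ => gap_ge0 a) gap_eq0 a isT.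
  by rewrite mulf_eq0 sqrf_eq0 subr_eq0 => /orP [/eqP <- | /eqP ->]; rewrite ?mulr0.
by rewrite -!mulmxA -/y diag_y -scalemxAr mulmxA hJ mul1mx.
Qed.

Lemma lead_eigvec_abs :
  (forall i j, 0 <= (J *m diag_mx s *m J^T) i j) ->
  let w := map_mx Num.norm (col 0 J) in
  J *m diag_mx s *m J^T *m w = s 0 0 *: w.
Proof.
move=> hS w.
have unit_w : \sum_i w i 0 ^+ 2 = 1.
  have := orthogonal_col_dotE J 0 0 hJ; rewrite eqxx mulr1n => <-.
  by apply: eq_bigr => i _; rewrite !mxE real_normK ?num_real // expr2.
have qform_col0 : qform (J *m diag_mx s *m J^T) (col 0 J) = s 0 0.
  have e0 a : (J^T *m col 0 J) a 0 = (a == 0)%:R.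
    by rewrite -(orthogonal_col_dotE J a 0 hJ) mxE; apply: eq_bigr => i _; rewrite !mxE.
  rewrite qform_spectral (bigD1 0) //= e0 eqxx expr1n mulr1 big1 ?addr0 // => a ha.
  by rewrite e0 (negbTE ha) expr0n mulr0.
apply: qform_eq_top_eigen => //; apply/eqP; rewrite eq_le qform_le_top //= unit_w mulr1.
by rewrite -qform_col0 qform_le_abs.
Qed.
End TopEigenvalue.

Lemma irreducible_mx_zero_pattern {R : rcfType} {K : nat} (A B : 'M[R]_K) :
  (forall i j, B i j = 0 -> A i j = 0) -> irreducible_mx A -> irreducible_mx B.
Proof.
move=> hAB hA [T [T0 TT hT]]; apply: hA; exists T; split=> // i j hi hj.
exact/hAB/hT.
Qed.

(* Off the support of [w], [(S w)_i = 0] forces row [i] of [S] to vanish on it. *)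
Lemma irreducible_eigvec_neq0 {R : rcfType} {K : nat} (S : 'M[R]_K) (w : 'cV[R]_K) lam :
  (forall i j, 0 <= S i j) -> irreducible_mx S ->
  (forall i, 0 <= w i 0) -> w != 0 -> S *m w = lam *: w -> forall i, w i 0 != 0.
Proof.
move=> hS hirr hw w_neq0 hSw i0; apply/negP => /eqP w_i0; apply: hirr.
exists [set j | w j 0 != 0]; split.
- apply: contraNneq w_neq0 => supp0; apply/eqP/matrixP => j b.
  have : j \notin [set j | w j 0 != 0] by rewrite supp0 inE.
  by rewrite inE negbK ord1 mxE => /eqP.
- by apply/eqP => suppT; have := in_setT i0; rewrite -suppT inE w_i0 eqxx.
- move=> i j; rewrite !inE negbK => /eqP w_i wj_neq0.
  have /matrixP/(_ i 0) := hSw; rewrite [in RHS]mxE w_i mulr0 mxE => row_eq0.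
  have term_ge0 j' : 0 <= S i j' * w j' 0 by rewrite mulr_ge0.
  have /eqP := @psumr_eq0P _ _ _ _ (fun j' _ => term_ge0 j') row_eq0 j isT.
  by rewrite mulf_eq0 (negbTE wj_neq0) orbF => /eqP.
Qed.

Lemma irreducible_lead_eigvec_neq0 {R : rcfType} {K : nat} (S J : 'M[R]_K.+1) (s : 'rV[R]_K.+1) :
  J *m J^T = 1%:M -> (forall a, s 0 a <= s 0 0) -> S = J *m diag_mx s *m J^T ->
  (forall i j, 0 <= S i j) -> irreducible_mx S -> forall i, J i 0 != 0.
Proof.
move=> hJ s0_max -> hS hirr i.
have := irreducible_eigvec_neq0 _ _ _ hS hirr _ _ (lead_eigvec_abs _ _ hJ s0_max hS) i.
rewrite !mxE normr_eq0; apply=> [j|]; first by rewrite mxE normr_ge0.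
apply: contraTneq (oner_neq0 R) => w0.
have := orthogonal_col_dotE J 0 0 hJ; rewrite eqxx mulr1n => <-.
rewrite negbK; apply/eqP/big1 => j _; have /matrixP/(_ j 0) := w0.
by rewrite !mxE => /eqP; rewrite normr_eq0 => /eqP ->; rewrite mul0r.
Qed.

Lemma scaled_gram_entry {R : comPzRingType} {K K' : nat}
    (d : 'rV[R]_K) (A : 'M[R]_(K, K')) (d' : 'rV[R]_K') i j :
  ((diag_mx d *m A *m diag_mx d') *m (diag_mx d *m A *m diag_mx d')^T) i j =
  d 0 i * d 0 j * \sum_k A i k * A j k * d' 0 k ^+ 2.
Proof.
rewrite mul_diag_mx mul_mx_diag mxE mulr_sumr; apply: eq_bigr => k _.
by rewrite !mxE; ring.
Qed.

Lemma scaled_gram_ge0 {R : realDomainType} {K K' : nat}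
    (d : 'rV[R]_K) (A : 'M[R]_(K, K')) (d' : 'rV[R]_K') i j :
  (forall a, 0 <= d 0 a) -> (forall a b, 0 <= A a b) ->
  0 <= ((diag_mx d *m A *m diag_mx d') *m (diag_mx d *m A *m diag_mx d')^T) i j.
Proof.
move=> hd hA; rewrite scaled_gram_entry; apply: mulr_ge0; first exact: mulr_ge0.
by apply: sumr_ge0 => k _; rewrite mulr_ge0 ?sqr_ge0 ?mulr_ge0.
Qed.

Lemma scaled_gram_eq0 {R : realDomainType} {K K' : nat}
    (d : 'rV[R]_K) (A : 'M[R]_(K, K')) (d' : 'rV[R]_K') i j :
  (forall a, 0 < d 0 a) -> (forall b, 0 < d' 0 b) -> (forall a b, 0 <= A a b) ->
  ((diag_mx d *m A *m diag_mx d') *m (diag_mx d *m A *m diag_mx d')^T) i j = 0 ->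
  (A *m A^T) i j = 0.
Proof.
move=> hd hd' hA; rewrite scaled_gram_entry => /eqP.
rewrite !mulf_eq0 !(gt_eqF (hd _)) /= => /eqP sum_eq0.
have term_ge0 k : 0 <= A i k * A j k * d' 0 k ^+ 2 by rewrite mulr_ge0 ?sqr_ge0 ?mulr_ge0.
rewrite mxE; apply: big1 => k _; rewrite mxE.
have /eqP := @psumr_eq0P _ _ _ _ (fun k _ => term_ge0 k) sum_eq0 k isT.
by rewrite mulf_eq0 sqrf_eq0 (gt_eqF (hd' k)) orbF => /eqP.
Qed.

Lemma fnorm_ge0 {R : rcfType} {n : nat} (x : 'I_n -> R) : 0 <= fnorm x.
Proof. exact: sqrtr_ge0. Qed.

Lemma fnorm_gt0 {R : rcfType} {n : nat} (x : 'I_n -> R) i : x i != 0 -> 0 < fnorm x.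
Proof.
move=> x_i; rewrite sqrtr_gt0 (bigD1 i) //= ltr_pwDl //.
  by rewrite lt_def sqrf_eq0 x_i sqr_ge0.
by apply: sumr_ge0 => j _; apply: sqr_ge0.
Qed.

Lemma comm_norm_gt0 {R : rcfType} {n K : nat} (lab : 'I_n -> 'I_K) (x : 'I_n -> R) i :
  x i != 0 -> 0 < comm_norm lab x (lab i).
Proof. by move=> x_i; apply: (fnorm_gt0 _ i); rewrite eqxx mulr1. Qed.

Section SbarPattern.
Variables (R : rcfType) (n m K K' Q : nat) (l : 'I_n -> 'I_K) (r : 'I_m -> 'I_K').
Variables (theta : 'I_n -> R) (delta : 'I_m -> R).
Variables (E : 'M[R]_K) (F : 'I_Q -> 'M[R]_(K, K')).
Hypothesis E_ge0 : forall a b, 0 <= E a b.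
Hypothesis F_ge0 : forall q a b, 0 <= F q a b.

Let Psi_ge0 {N L : nat} (lab : 'I_N -> 'I_L) (x : 'I_N -> R) a :
  0 <= (\row_k (comm_norm lab x k / fnorm x)) 0 a.
Proof. by rewrite mxE divr_ge0 ?fnorm_ge0. Qed.

Lemma Sbar_ge0 i j : 0 <= Sbar l r theta delta E F i j.
Proof.
rewrite 2!mxE summxE /PsiM addr_ge0 //.
  by rewrite mulr_ge0 ?divr_ge0 ?sqr_ge0 ?scaled_gram_ge0.
by apply: sumr_ge0 => q _; apply: scaled_gram_ge0.
Qed.

Lemma Sbar_eq0_gram_eq0 i j :
  (forall a, 0 < comm_norm l theta a) -> 0 < fnorm theta -> 0 < fnorm delta ->
  Sbar l r theta delta E F i j = 0 -> (E *m E^T) i j = 0.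
Proof.
move=> hN htheta hdelta.
have alpha_gt0 : 0 < fnorm theta ^+ 2 / fnorm delta ^+ 2 by rewrite divr_gt0 ?exprn_gt0.
rewrite 2!mxE summxE /PsiM => /eqP; rewrite paddr_eq0; first last.
- by apply: sumr_ge0 => q _; apply: scaled_gram_ge0.
- by apply: mulr_ge0; [exact: ltW | exact: scaled_gram_ge0].
rewrite mulf_eq0 gt_eqF //= => /andP [/eqP + _].
by apply: scaled_gram_eq0 => // a; rewrite mxE divr_gt0.
Qed.
End SbarPattern.

Definition lead_ratio {R : fieldType} {n k : nat} (U : 'M[R]_(n, k.+1)) : 'M[R]_(n, k) :=
  \matrix_(i, j) (U i (lift ord0 j) / U i 0).

Lemma ratio_mxE {R : fieldType} {n k : nat} (U : 'M[R]_(n, k.+1)) (O : 'M[R]_k) (c : R) :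
  \matrix_(i, j) (((\matrix_(i0, j0) U i0 (lift ord0 j0)) *m O) i j / (c * U i ord0))
  = c^-1 *: (lead_ratio U *m O).
Proof.
apply/matrixP => i j; rewrite !mxE invfM mulr_sumr mulr_suml.
by apply: eq_bigr => j' _; rewrite !mxE; ring.
Qed.

Lemma row_lead_ratio_scale {R : fieldType} {n N k : nat}
    (U : 'M[R]_(n, k.+1)) (V : 'M[R]_(N, k.+1)) i a g :
  g != 0 -> row i U = g *: row a V -> row i (lead_ratio U) = row a (lead_ratio V).
Proof.
move=> g_neq0 /rowP hU; apply/rowP => j; rewrite !mxE.
have := hU (lift ord0 j); have := hU 0; rewrite !mxE => -> ->.
by rewrite invfM mulrACA mulfV ?mul1r.
Qed.

Lemma row_ThetaM_mul {R : rcfType} {n K : nat} (l : 'I_n -> 'I_K) (theta : 'I_n -> R)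
    (J : 'M[R]_K) i :
  row i (ThetaM l theta *m J) = (theta i / comm_norm l theta (l i)) *: row (l i) J.
Proof.
apply/rowP => a; rewrite !mxE (bigD1 (l i)) //= big1 ?addr0 => [|b b_neq].
  by rewrite mxE eqxx mulr1.
by rewrite mxE eq_sym (negbTE b_neq) mulr0 !mul0r.
Qed.

Lemma lead_ratio_dist {R : fieldType} {k : nat} (J : 'M[R]_k.+1) a b :
  J *m J^T = 1%:M -> a != b -> J a 0 != 0 -> J b 0 != 0 ->
  \sum_j (row a (lead_ratio J) - row b (lead_ratio J)) 0 j ^+ 2
  = (J a 0 ^+ 2)^-1 + (J b 0 ^+ 2)^-1.
Proof.
move=> hJ hab ha hb.
have tail_dot u v : \sum_j J u (lift ord0 j) * J v (lift ord0 j) = (u == v)%:R - J u 0 * J v 0.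
  by rewrite -(orthogonal_dotE J u v hJ) big_ord_recl addrC addKr.
transitivity (\sum_j ((J a 0 ^+ 2)^-1 * (J a (lift ord0 j) * J a (lift ord0 j))
    + (J b 0 ^+ 2)^-1 * (J b (lift ord0 j) * J b (lift ord0 j))
    - 2 * (J a 0 * J b 0)^-1 * (J a (lift ord0 j) * J b (lift ord0 j)))).
  by apply: eq_bigr => j _; rewrite !mxE; field; rewrite ha hb.
rewrite sumrB big_split /= -!mulr_sumr !tail_dot !eqxx (negbTE hab) /=.
by field; rewrite ha hb.
Qed.

Lemma inv_sqr_add_ge4 {R : realFieldType} (x y : R) :
  x != 0 -> y != 0 -> x ^+ 2 + y ^+ 2 <= 1 -> 4 <= (x ^+ 2)^-1 + (y ^+ 2)^-1.
Proof.
move=> x_neq0 y_neq0; have p_gt0 : 0 < x ^+ 2 by rewrite lt_def sqrf_eq0 x_neq0 sqr_ge0.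
have q_gt0 : 0 < y ^+ 2 by rewrite lt_def sqrf_eq0 y_neq0 sqr_ge0.
move: (x ^+ 2) (y ^+ 2) p_gt0 q_gt0 => p q p_gt0 q_gt0 hpq.
have -> : p^-1 + q^-1 = (p + q) / (p * q) by field; rewrite ?gt_eqF.
rewrite ler_pdivlMr ?mulr_gt0 //.
(* [4 p q <= (p + q)^2 <= p + q] *)
have : 0 <= (p + q) * (1 - (p + q)) by apply: mulr_ge0; lra.
have : 0 <= (p - q) ^+ 2 := sqr_ge0 _.
nra.
Qed.

Lemma vnorm_sqr {R : rcfType} {p : nat} (v : 'rV[R]_p) : vnorm v ^+ 2 = \sum_j v 0 j ^+ 2.
Proof. by rewrite sqr_sqrtr // sumr_ge0 // => j _; apply: sqr_ge0. Qed.

Lemma vnorm0 {R : rcfType} {p : nat} : vnorm (0 : 'rV[R]_p) = 0.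
Proof. by rewrite /vnorm big1 ?sqrtr0 // => j _; rewrite mxE expr0n. Qed.

Lemma vnormZ {R : rcfType} {p : nat} (x : R) (v : 'rV[R]_p) :
  vnorm (x *: v) = `|x| * vnorm v.
Proof.
rewrite /vnorm -sqrtr_sqr -sqrtrM ?sqr_ge0 // mulr_sumr.
by congr Num.sqrt; apply: eq_bigr => j _; rewrite mxE exprMn.
Qed.

Lemma vnorm_mul_orthogonal {R : rcfType} {p : nat} (v : 'rV[R]_p) (O : 'M[R]_p) :
  O *m O^T = 1%:M -> vnorm (v *m O) = vnorm v.
Proof.
have sum_sqrE (u : 'rV[R]_p) : \sum_j u 0 j ^+ 2 = (u *m u^T) 0 0.
  by rewrite mxE; apply: eq_bigr => j _; rewrite mxE expr2.
by move=> hO; rewrite /vnorm !sum_sqrE trmx_mul mulmxA -(mulmxA v) hO mulmx1.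
Qed.

(* Columns are 0-indexed: column [0] of [J] is [u_1] and column [lift ord0 j]
   is [u_(j+2)]. *)
Theorem lemma4 (R : rcfType) (n m k K' Q : nat)
    (hk : (1 <= k)%N) (hK' : (0 < K')%N) (hQ : (0 < Q)%N)
    (l : 'I_n -> 'I_k.+1) (r : 'I_m -> 'I_K')
    (hl : forall a : 'I_k.+1, exists i, l i = a)
    (hr : forall b : 'I_K', exists j, r j = b)
    (theta : 'I_n -> R) (delta : 'I_m -> R)
    (htheta : forall i, 0 < theta i <= 1)
    (hdelta : forall j, 0 < delta j <= 1)
    (E : 'M[R]_k.+1) (F : 'I_Q -> 'M[R]_(k.+1, K'))
    (hEsym : E^T = E)
    (hE01 : forall a b, 0 <= E a b <= 1)
    (hF01 : forall q a b, 0 <= F q a b <= 1)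
    (hEirr : irreducible_mx (E *m E^T))
    (hFirr : forall q, irreducible_mx (F q *m (F q)^T))
    (J : 'M[R]_k.+1) (sigma : 'rV[R]_k.+1)
    (hJorth : J *m J^T = 1%:M)
    (hsigma : forall a b : 'I_k.+1, (a <= b)%N -> sigma 0 b <= sigma 0 a)
    (hdecomp : Sbar l r theta delta E F = J *m diag_mx sigma *m J^T)
    (O : 'M[R]_k) (hO : O *m O^T = 1%:M)
    (c : R) (hc : c = 1 \/ c = -1) :
  let U := ThetaM l theta *m J in
  let Utail : 'M[R]_(n, k) := \matrix_(i0, j0) U i0 (lift ord0 j0) in
  let UO := Utail *m O in
  let Rm : 'M[R]_(n, k) := \matrix_(i, j) (UO i j / (c * U i ord0)) in
  forall i1 i2 : 'I_n,
    (l i1 != l i2 -> 2 <= vnorm (row i1 Rm - row i2 Rm)) /\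
    (l i1 = l i2 -> vnorm (row i1 Rm - row i2 Rm) = 0).
Proof.
move=> U Utail UO Rm i1 i2.
have theta_neq0 i : theta i != 0 by case/andP: (htheta i) => /gt_eqF ->.
have E_ge0 a b : 0 <= E a b by case/andP: (hE01 a b).
have F_ge0 q a b : 0 <= F q a b by case/andP: (hF01 q a b).
have N_gt0 a : 0 < comm_norm l theta a.
  have [i <-] := hl a; exact: comm_norm_gt0.
have J_lead_neq0 : forall a, J a 0 != 0.
  apply: (irreducible_lead_eigvec_neq0 _ _ _ hJorth _ hdecomp) => [a|i j|].
  - exact: hsigma.
  - exact: Sbar_ge0.
  apply: irreducible_mx_zero_pattern hEirr => a b; apply: Sbar_eq0_gram_eq0 => //.
  + by have [i _] := hl ord0; apply: fnorm_gt0 (theta_neq0 i).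
  + have [j _] := hr (Ordinal hK'); apply: fnorm_gt0 (_ : delta j != 0).
    by case/andP: (hdelta j) => /gt_eqF ->.
pose L := lead_ratio J.
have row_U i : row i (lead_ratio U) = row (l i) L.
  apply: row_lead_ratio_scale (row_ThetaM_mul _ _ _ _).
  by rewrite mulf_neq0 ?invr_eq0 ?theta_neq0 ?gt_eqF.
have row_Rm i : row i Rm = c^-1 *: (row (l i) L *m O).
  by rewrite (ratio_mxE U O c : Rm = _) linearZ /= row_mul row_U.
have -> : vnorm (row i1 Rm - row i2 Rm) = vnorm (row (l i1) L - row (l i2) L).
  have c_norm : `|c| = 1 by case: hc => ->; rewrite ?normrN normr1.
  rewrite !row_Rm -scalerBr -mulmxBl vnormZ vnorm_mul_orthogonal //.
  by rewrite normfV c_norm invr1 mul1r.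
split=> [hne | ->]; last by rewrite subrr vnorm0.
rewrite -(ler_pXn2r (isT : (0 < 2)%N)) ?nnegrE ?sqrtr_ge0 // vnorm_sqr lead_ratio_dist //.
by rewrite expr2 -natrM inv_sqr_add_ge4 ?orthogonal_col_sqr_le1.
Qed.
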